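(* Let $B$ be a path-connected space, $b_0\in B$, and let $\{p_s\colon E_s\to B\}_{s\in S}$ be a family of disk-hedgehog coverings with each $E_s$ a Peano space, together with points $e_s\in E_s$ with $p_s(e_s)=b_0$. Then the Peano fibered product $(p,e)$ of $\{(p_s,e_s)\}_{s\in S}$ is a disk-hedgehog covering which is the supremum of $\{(p_s,e_s)\}_{s\in S}$: $(p,e)\ge(p_s,e_s)$ for all $s\in S$, and $(q,e')\ge(p,e)$ for every pointed disk-hedgehog covering $(q,e')$ with Peano total space satisfying $(q,e')\ge(p_s,e_s)$ for all $s$.
   Context: All maps are continuous; a Peano space is a connected, locally path-connected space. The Peanification of a space $Y$ is the set $Y$ with the topology whose basis consists of path components of open subsets of $Y$. For a class $\mathcal{P}$ of spaces, $p\colon E\to B$ is a $\mathcal{P}$-covering if for every $e_0\in E$, $X\in\mathcal{P}$, $x_0\in X$ and map $f\colon X\to B$ with $f(x_0)=p(e_0)$ there is a unique map $g\colon X\to E$ with $p\circ g=f$, $g(x_0)=e_0$. A directed wedge is $(Z,z_0)=\bigvee_{s\in S}(Z_s,z_s)$, a wedge of pointed Peano spaces indexed by a directed set $S$, topologized so that $U\subset Z\setminus\{z_0\}$ is open iff each $U\cap Z_s$ is open, and $U\ni z_0$ is an open neighborhood of $z_0$ iff each $U\cap Z_s$ is open and there is $t\in S$ with $Z_s\subset U$ for all $s>t$. A disk-hedgehog is a directed wedge with each $Z_s$ homeomorphic to the 2-disk $D^2$; a disk-hedgehog covering is a $\mathcal{P}$-covering for $\mathcal{P}$ the class of all disk-hedgehogs.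 For disk-hedgehog coverings $p_i\colon E_i\to B$ ($E_i$ Peano) and $e_i\in E_i$, $(p_1,e_1)\ge(p_2,e_2)$ means $p_1(e_1)=p_2(e_2)$ and there is a map $f\colon E_1\to E_2$ with $p_2\circ f=p_1$ and $f(e_1)=e_2$. The Peano fibered product of $\{(p_s,e_s)\}$ is $(p,e)$, where $e=\{e_s\}_{s\in S}$, $E$ is the Peanification of the path component of $e$ in $\{\{x_s\}\in\prod_{s}E_s : p_s(x_s)=p_t(x_t)\ \forall s,t\}$, and $p(\{x_s\})=p_t(x_t)$ for any $t$. *)

From HB Require Import structures.
From mathcomp Require Import all_boot all_order all_algebra.
From mathcomp Require Import all_classical all_reals all_analysis.
From mathcomp Require Import wedge_sigT.
From mathcomp Require Import Rstruct Rstruct_topology.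
From Stdlib Require Import Rdefinitions.

Set Implicit Arguments.
Unset Strict Implicit.
Unset Printing Implicit Defensive.

Import Order.TTheory GRing.Theory Num.Theory.
Local Open Scope classical_set_scope.
Local Open Scope ring_scope.

Definition is_path {Y : topologicalType} (g : R -> Y) :=
  {within `[0%R, 1%R], continuous g}.

Definition path_comp {Y : topologicalType} (A : set Y) (x : Y) : set Y :=
  [set y | exists g : R -> Y, [/\ is_path g, g 0%R = x, g 1%R = y &
                                 g @` `[0%R, 1%R] `<=` A]].

Definition path_connected {Y : topologicalType} (A : set Y) :=
  forall x y, A x -> A y -> path_comp A x y.

Definition locally_path_connected (Y : topologicalType) :=
  forall (x : Y) (U : set Y), nbhs x U ->
    exists V : set Y, [/\ open V, V x, V `<=` U & path_connected V].

Definition Peano (Y : topologicalType) :=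
  connected [set: Y] /\ locally_path_connected Y.

Definition peanify (Y : Type) : Type := Y.

Section Peanification.
Context {Y : topologicalType}.

Definition peano_basis : set (set Y) :=
  [set P | exists (U : set Y) (x : Y), [/\ open U, U x & P = path_comp U x]].

HB.instance Definition _ := Choice.on (peanify Y).
HB.instance Definition _ := isSubBaseTopological.Build (peanify Y)
  (peano_basis : set (set (peanify Y))) id.

End Peanification.

Definition disk_set : set (R * R)%type :=
  [set z | (z.1 ^+ 2 + z.2 ^+ 2 <= 1)%R].
Definition Disk : topologicalType := set_type disk_set.

Definition directed {d : Order.disp_t} (S : porderType d) :=
  forall a b : S, exists c : S, (a <= c)%O /\ (b <= c)%O.

Section DiskWedge.
Context {d : Order.disp_t} {S : porderType d} (z : S -> Disk).

Definition dwedge : Type := @wedge _ (fun _ : S => Disk) z.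
Definition dlift (s : S) : Disk -> dwedge := @wedge_lift _ (fun _ : S => Disk) z s.
Arguments dlift : clear implicits.

Definition dwedge_open : set (set dwedge) :=
  [set U | (forall s, open (dlift s @^-1` U)) /\
           (forall s0, U (dlift s0 (z s0)) ->
              exists t : S, forall s : S, (t < s)%O -> range (dlift s) `<=` U)].

HB.instance Definition _ := Choice.on dwedge.
HB.instance Definition _ := isSubBaseTopological.Build dwedge
  dwedge_open id.

End DiskWedge.
Arguments dlift {d S} z s _.

Section Coverings.
Context {B : topologicalType}.

Definition unique_lifting (X : topologicalType) {E : topologicalType}
    (p : E -> B) :=
  forall (e0 : E) (x0 : X) (f : X -> B), continuous f -> f x0 = p e0 ->
    exists! g : X -> E, [/\ continuous g, p \o g = f & g x0 = e0].

Definition dh_covering {E : topologicalType} (p : E -> B) :=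
  continuous p /\
  forall (d : Order.disp_t) (S : porderType d) (z : S -> Disk),
    directed S -> unique_lifting (dwedge z) p.

Definition dh_ge {E1 E2 : topologicalType} (p1 : E1 -> B) (e1 : E1)
    (p2 : E2 -> B) (e2 : E2) :=
  [/\ Peano E1, Peano E2, dh_covering p1, dh_covering p2 &
      p1 e1 = p2 e2 /\
      exists f : E1 -> E2, [/\ continuous f, p2 \o f = p1 & f e1 = e2]].

End Coverings.

Section FiberedProduct.
Context {B : topologicalType} {S : Type} {E : S -> topologicalType}
  (p : forall s, E s -> B) (e : forall s, E s).

Definition fib_set : set (prod_topology E) :=
  [set x | forall s t, p (x s) = p (x t)].

Definition fib_comp : set (prod_topology E) := path_comp fib_set e.

Definition fib_space : topologicalType := peanify (set_type fib_comp).

Definition fib_map (t : S) : fib_space -> B :=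
  fun x => p (projT1 (x : set_type fib_comp) t).

Lemma fib_pt_proof (b0 : B) (he : forall s, p (e s) = b0) : e \in fib_comp.
Proof.
apply/mem_set; exists (cst e); split => //.
- by apply: continuous_subspaceT => x; exact: cst_continuous.
- by move=> _ [r _ <-] s t; rewrite /= !he.
Qed.

Definition fib_pt (b0 : B) (he : forall s, p (e s) = b0) : fib_space :=
  exist _ e (fib_pt_proof he).

End FiberedProduct.
Arguments fib_map {B S E} p e t _.
Arguments fib_pt {B S E} p e {b0} he.

(** The fibered product [P] of the [E_s] over [B] maps to every [E_s].  A
    family of maps [X -> E_s] over a common map to [B], with [X] a Peano
    space, lands in the path component of the base point as soon as one point
    does, so it factors continuously through [P]: first through the product
    topology, then through the Peanification, since a map out of a locally
    path-connected space stays continuous into the Peanification of its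
    target.  Directed wedges of disks are Peano spaces, so lifting a map from
    a disk-hedgehog separately into each [E_s] and factoring gives the lifting
    property of [P], unique because each lift is.  Factoring the maps
    [E' -> E_s] of an upper bound [(q,e')] gives the supremum property. *)

From HB Require Import structures.
From mathcomp Require Import all_boot all_order all_algebra.
From mathcomp Require Import all_classical all_reals all_analysis.
From mathcomp Require Import wedge_sigT Rstruct Rstruct_topology.
From mathcomp Require Import lra ring.
From Stdlib Require Import Rdefinitions.

Set Implicit Arguments.
Unset Strict Implicit.
Unset Printing Implicit Defensive.

Import Order.TTheory GRing.Theory Num.Theory.
Local Open Scope classical_set_scope.

Section Subbase.
Context {T : topologicalType} {I : choiceType} (D : set I) (b : I -> set T).
Hypothesis openE_subbase : forall A, open A <->
  exists2 F, F `<=` finI_from D b & \bigcup_(i in F) i = A.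

Lemma subbase_open i : D i -> open (b i).
Proof.
move=> Di; apply/openE_subbase; exists [set b i]; last by rewrite bigcup_set1.
by move=> _ ->; exact: finI_from1.
Qed.

Lemma subbase_nbhs_filter (x : T) (F : set_system T) : Filter F ->
  (forall i, D i -> b i x -> F (b i)) -> forall U, nbhs x U -> F U.
Proof.
move=> FF Fb U; rewrite nbhsE => -[A [oA Ax] AU].
apply: (filterS AU); move/openE_subbase: oA => [G GF GA].
move: Ax; rewrite -GA => -[C /[dup] CG /GF [J JD CE] Cx].
apply: (@filterS _ _ _ C); first by move=> y Cy; exists C.
rewrite -CE; apply: filter_bigI => i iJ; apply: Fb.
  by apply/set_mem; exact: JD.
by move: Cx; rewrite -CE; apply.
Qed.

Lemma subbase_continuous {X : topologicalType} (f : X -> T) :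
  (forall i, D i -> open (f @^-1` b i)) -> continuous f.
Proof.
move=> fb x; apply: subbase_nbhs_filter => i Di bfx.
by apply: open_nbhs_nbhs; split => //; exact: fb.
Qed.

Lemma subbase_nbhs_basic (x : T) (U : set T) : (exists i, D i /\ b i x) ->
  (forall i j, D i -> D j -> b i x -> b j x ->
    exists k, [/\ D k, b k x & b k `<=` b i `&` b j]) ->
  nbhs x U -> exists2 i, D i /\ b i x & b i `<=` U.
Proof.
move=> [i0 [Di0 bi0x]] join.
pose F := [set W | exists2 i, D i /\ b i x & b i `<=` W].
apply: (@subbase_nbhs_filter x F); last by move=> i Di bix; exists i.
constructor.
- by exists i0.
- move=> P Q [i [Di bix] iP] [j [Dj bjx] jQ].
  have [k [Dk bkx kij]] := join i j Di Dj bix bjx.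
  by exists k => // y /kij [/iP ? /jQ ?].
- by move=> P Q PQ [i ? iP]; exists i => //; exact: subset_trans PQ.
Qed.

End Subbase.

Notation i01 := (`[0%R, 1%R] : set R).

Section Paths.
Local Open Scope ring_scope.

Lemma i01P (t : R) : i01 t <-> 0 <= t <= 1.
Proof. by rewrite /= in_itv /= ?R0E ?R1E. Qed.

Lemma i01_0 : i01 0%R.
Proof. by apply/i01P; rewrite lexx ler01. Qed.

Lemma i01_1 : i01 1%R.
Proof. by apply/i01P; rewrite lexx ler01. Qed.

Lemma continuous_within_comp {T U V : topologicalType} (A : set T) (B : set U)
    (h : T -> U) (g : U -> V) :
  {within A, continuous h} -> (forall x, A x -> B (h x)) ->
  {within B, continuous g} -> {within A, continuous (g \o h)}.
Proof.
move=> /subspace_continuousP ch hAB /subspace_continuousP cg.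
apply/subspace_continuousP => x Ax W /= /(cg _ (hAB _ Ax)) /(ch _ Ax).
rewrite !nbhs_simpl /= /within => /= H; apply: (filterS _ H) => y Hy Ay.
exact: Hy Ay (hAB _ Ay).
Qed.

Lemma affine_continuous (a b : R) : continuous (fun t : R => t * a + b).
Proof.
move=> t; apply: (@cvgD R R^o R (nbhs t) _ (fun t : R => t * a) (fun=> b)).
  exact: mulrr_continuous.
exact: cvg_cst.
Qed.

Lemma is_path_affine {Y : topologicalType} (g : R -> Y) (a b : R) (A : set R) :
  is_path g -> (forall t, A t -> i01 (t * a + b)) ->
  {within A, continuous (g \o (fun t => t * a + b))}.
Proof.
move=> pg Ai01; apply: (continuous_within_comp _ Ai01) => //.
exact/continuous_subspaceT/affine_continuous.
Qed.

Context {Y : topologicalType}.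
Implicit Types (A B : set Y) (x y w : Y).

Lemma path_comp_refl A x : A x -> path_comp A x x.
Proof.
move=> Ax; exists (cst x); split => //; last by move=> _ [r _ <-].
exact/continuous_subspaceT/cst_continuous.
Qed.

Lemma path_comp_memr A x y : path_comp A x y -> A y.
Proof. by move=> [g [_ _ <- gA]]; apply: gA; exists 1%R => //; exact: i01_1. Qed.

Lemma path_compS A B x y : A `<=` B -> path_comp A x y -> path_comp B x y.
Proof. by move=> AB [g [? ? ? gA]]; exists g; split => // u /gA /AB. Qed.

Lemma path_comp_subpath (g : R -> Y) A (t u : R) : is_path g ->
  i01 t -> i01 u -> (forall r, i01 r -> A (g (r * (u - t) + t))) ->
  path_comp A (g t) (g u).
Proof.
move=> pg /i01P/andP[t0 t1] /i01P/andP[u0 u1] gA.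
have seg01 r : i01 r -> i01 (r * (u - t) + t).
  by move=> /i01P/andP[r0 r1]; apply/i01P/andP; split; nra.
exists (g \o (fun r => r * (u - t) + t)); split.
- exact: is_path_affine.
- by rewrite /= mul0r add0r.
- by rewrite /= mul1r subrK.
- by move=> _ [r Hr <-]; exact: gA.
Qed.

Lemma path_comp_sym A x y : path_comp A x y -> path_comp A y x.
Proof.
move=> [g [pg <- <- gA]]; apply: (path_comp_subpath pg i01_1 i01_0) => r Hr.
apply: gA; exists (r * (0 - 1) + 1) => //.
by move: Hr => /i01P/andP[? ?]; apply/i01P/andP; split; lra.
Qed.

Lemma path_comp_trans A x y w :
  path_comp A x y -> path_comp A y w -> path_comp A x w.
Proof.
move=> [g1 [pg1 g10 g11 g1A]] [g2 [pg2 g20 g21 g2A]].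
have halves : i01 = `[0%R, 2^-1] `|` `[2^-1, 1%R].
  apply/seteqP; split => t /=; rewrite !in_itv /= ?R0E ?R1E.
    move=> /andP[? ?]; have [?|?] := lerP t 2^-1; [left|right];
      by apply/andP; split => //; lra.
  by case=> /andP[? ?]; apply/andP; split; lra.
pose h t := if t <= 2^-1 then g1 (t * 2 + 0) else g2 (t * 2 + (-1)).
exists h; split.
- rewrite /is_path halves; apply: withinU_continuous; try exact: interval_closed.
  + apply: (@subspace_eq_continuous _ _ _ (g1 \o (fun t => t * 2 + 0))).
      move=> t /set_mem; rewrite /= in_itv /= => /andP[_ t_le].
      by rewrite /from_subspace /h /= t_le.
    apply: is_path_affine => // t; rewrite /= !in_itv /= ?R0E ?R1E => /andP[? ?].
    by apply/andP; split; lra.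
  + apply: (@subspace_eq_continuous _ _ _ (g2 \o (fun t => t * 2 + (-1)))).
      move=> t /set_mem; rewrite /= in_itv /= ?R1E => /andP[? ?].
      rewrite /from_subspace /h /=; case: (lerP t 2^-1) => // ?.
      have -> : t = 2^-1 by lra.
      have -> : 2^-1 * 2 + (-1) = 0 :> R by lra.
      have -> : 2^-1 * 2 + 0 = 1 :> R by lra.
      by rewrite g11 g20.
    apply: is_path_affine => // t; rewrite /= !in_itv /= ?R0E ?R1E => /andP[? ?].
    by apply/andP; split; lra.
- by rewrite /h R0E invr_ge0 ler0n mul0r add0r.
- rewrite /h R1E ifF; last by apply/negbTE; rewrite -ltNge; lra.
  by rewrite mul1r (_ : 2 + -1 = 1) //; lra.
- move=> _ [t /i01P/andP[? ?] <-]; rewrite /h; case: (lerP t 2^-1) => ?.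
    by apply: g1A; exists (t * 2 + 0) => //; apply/i01P/andP; split; lra.
  by apply: g2A; exists (t * 2 + (-1)) => //; apply/i01P/andP; split; lra.
Qed.

Lemma path_comp_in_comp A x y w :
  path_comp A x y -> path_comp A y w -> path_comp (path_comp A x) y w.
Proof.
move=> xy [g [pg g0 g1 gA]]; exists g; split => //.
move=> _ [r Hr <-]; apply: (path_comp_trans xy); rewrite -g0.
apply: (path_comp_subpath pg i01_0 Hr) => u u01; apply: gA; exists (u * (r - 0) + 0) => //.
by move: Hr u01 => /i01P/andP[? ?] /i01P/andP[? ?]; apply/i01P/andP; split; nra.
Qed.

Lemma path_comp_map {Z : topologicalType} (f : Y -> Z) A (B : set Z) x y :
  continuous f -> (forall u, A u -> B (f u)) ->
  path_comp A x y -> path_comp B (f x) (f y).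
Proof.
move=> cf fAB [g [pg <- <- gA]]; exists (f \o g); split => //.
- apply: (continuous_within_comp (B := setT) pg) => //.
  exact: continuous_subspaceT.
- by move=> _ [t Ht <-]; apply: fAB; apply: gA; exists t.
Qed.

End Paths.

Lemma path_connected_connected (X : topologicalType) :
  (forall x y : X, path_comp setT x y) -> connected [set: X].
Proof.
move=> pcX; have [->|/set0P[x0 _]] := eqVneq [set: X] set0; first exact: connected0.
pose path x := projT1 (cid (pcX x0 x)).
have pathP x : [/\ is_path (path x), path x 0%R = x0, path x 1%R = x &
    path x @` i01 `<=` setT] := projT2 (cid (pcX x0 x)).
have -> : [set: X] = \bigcup_(x in [set: X]) (path x @` i01).
  apply/seteqP; split => // x _; exists x => //.
  by case: (pathP x) => _ _ px1 _; exists 1%R; [exact: i01_1 | ].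
apply: bigcup_connected.
  by exists x0 => x _; case: (pathP x) => _ px0 _ _; exists 0%R; [exact: i01_0 | ].
move=> x _; case: (pathP x) => pg _ _ _.
apply: connected_continuous_connected => //; exact: segment_connected.
Qed.

Lemma Peano_path_comp (X : topologicalType) : Peano X ->
  forall x y : X, path_comp setT x y.
Proof.
move=> [cX lX] x.
have pc_nbhs (y : X) :
    exists V : set X, [/\ open V, V y & forall z, V z -> path_comp setT y z].
  have [V [oV Vy _ pV]] := lX y setT filterT.
  by exists V; split => // z Vz; apply: path_compS (pV _ _ Vy Vz).
pose C := path_comp [set: X] x.
have oC : open C.
  rewrite openE => y Cy; have [V [oV Vy yV]] := pc_nbhs y.
  apply: (@filterS _ _ _ V); last exact: open_nbhs_nbhs.
  by move=> w Vw; exact: path_comp_trans Cy (yV _ Vw).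
have cC : closed C.
  rewrite -[C]setCK closedC openE => y nCy; have [V [oV Vy yV]] := pc_nbhs y.
  apply: (@filterS _ _ _ V); last exact: open_nbhs_nbhs.
  by move=> w Vw Cw; apply: nCy; exact: path_comp_trans Cw (path_comp_sym (yV _ Vw)).
have CT : C = setT.
  apply: cX; first by exists x; exact: path_comp_refl.
  - by exists C => //; rewrite setTI.
  - by exists C => //; rewrite setTI.
by move=> y; rewrite -/C CT.
Qed.

(** * The Peanification *)

Section Peanification.
Local Open Scope ring_scope.
Context {Y : topologicalType}.

Lemma openE_peanify (A : set (peanify Y)) : open A <->
  exists2 F, F `<=` finI_from (@peano_basis Y) id & \bigcup_(i in F) i = A.
Proof. by split => -[F ? ?]; exists F. Qed.

Lemma peano_basis_open (P : set (peanify Y)) : @peano_basis Y P -> open P.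
Proof. exact: (subbase_open openE_peanify). Qed.

Lemma peanify_id_continuous : continuous (fun x : peanify Y => (x : Y)).
Proof.
apply/continuousP => U oU.
have -> : (fun x : peanify Y => (x : Y)) @^-1` U =
    \bigcup_(x in U) (path_comp U x : set (peanify Y)).
  apply/seteqP; split => x /=; first by move=> Ux; exists x => //; exact: path_comp_refl.
  by move=> [y _ /path_comp_memr].
apply: bigcup_open => x Ux; apply: peano_basis_open.
by exists U, x.
Qed.

Lemma continuous_peanify {X : topologicalType} (f : X -> Y) :
  locally_path_connected X -> continuous f ->
  continuous (f : X -> peanify Y).
Proof.
move=> lX cf; apply: (subbase_continuous openE_peanify) => _ [U [y [oU Uy ->]]].
rewrite openE => x /= yfx.
have /lX [V [oV Vx VU pV]] : nbhs x (f @^-1` U).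
  by apply: cf; apply: open_nbhs_nbhs; split => //; exact: path_comp_memr yfx.
apply: (@filterS _ _ _ V); last exact: open_nbhs_nbhs.
move=> x' Vx'; apply: (path_comp_trans yfx).
exact: path_comp_map cf VU (pV _ _ Vx Vx').
Qed.

(** A short subpath of a path inside the open set [U] stays in the path
    component of [U] it starts in, since [U] pulls back to a neighbourhood. *)
Lemma is_path_peanify (g : R -> Y) : is_path g -> @is_path (peanify Y) g.
Proof.
move=> pg; have /subspace_continuousP cg := pg.
apply/subspace_continuousP => t t01 W.
apply: (subbase_nbhs_filter openE_peanify) => // _ [U [y [oU Uy ->]]] ygt.
have /nbhs_ballP [e e0 eU] := cg t t01 U
  (open_nbhs_nbhs (conj oU (path_comp_memr ygt))).
apply/nbhs_ballP; exists e => // s /= ets s01.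
apply: (path_comp_trans ygt); apply: path_comp_subpath => // r r01.
have sub01 : i01 (r * (s - t) + t).
  move: r01 t01 s01 => /i01P/andP[? ?] /i01P/andP[? ?] /i01P/andP[? ?].
  by apply/i01P/andP; split; nra.
apply: (eU _ _ sub01) => /=.
move: ets r01; rewrite /ball /= !ltr_distlC => /andP[? ?] /i01P/andP[? ?].
by apply/andP; split; nra.
Qed.

Lemma path_comp_peanify (a b : Y) :
  path_comp setT a b -> @path_comp (peanify Y) setT a b.
Proof.
by move=> [g [pg g0 g1 _]]; exists g; split => //; exact: is_path_peanify.
Qed.

Lemma peanify_lpc : locally_path_connected (peanify Y).
Proof.
move=> x U /(subbase_nbhs_basic openE_peanify) [].
- exists (path_comp [set: Y] x : set (peanify Y)); split; last exact: path_comp_refl.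
  by exists [set: Y], x; split => //; exact: openT.
- move=> _ _ [W1 [y1 [oW1 _ ->]]] [W2 [y2 [oW2 _ ->]]] y1x y2x.
  have W12x : (W1 `&` W2) x by split; [exact: path_comp_memr y1x | exact: path_comp_memr y2x].
  exists (path_comp (W1 `&` W2) x); split; first by exists (W1 `&` W2), x; split => //; exact: openI.
    exact: path_comp_refl.
  by move=> w xw; split; [apply: path_comp_trans y1x _ | apply: path_comp_trans y2x _];
    apply: path_compS xw => ? [].
- move=> _ [[W [y [oW Wy ->]]] yx] yU.
  exists (path_comp W y); split => //; first by apply: peano_basis_open; exists W, y.
  move=> a b ya yb.
  have [g [pg g0 g1 gP]] := path_comp_in_comp ya (path_comp_trans (path_comp_sym ya) yb).
  by exists g; split => //; exact: is_path_peanify.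
Qed.

End Peanification.

(** * The closed disk *)

Section Disk.
Local Open Scope ring_scope.
Notation pt := (R * R)%type.

Lemma disk_ball_open (c : pt) e : open [set b : Disk | ball c e (val b)].
Proof.
have ball_open : open (ball c e).
  rewrite openE => q [? ?]; exists (ball c.1 e, ball c.2 e) => /=; last by move=> ? [].
  by split; apply: open_nbhs_nbhs; split => //; exact: (@ball_open R R^o).
exact: ((continuousP (fun b : Disk => val b)).1 (@initial_continuous _ _ _) _ ball_open).
Qed.

Lemma disk_nbhs_ball (a : Disk) (W : set Disk) : nbhs a W ->
  exists2 e, 0 < e & forall b : Disk, ball (val a) e (val b) -> W b.
Proof.
rewrite nbhsE => -[N [oN Na] NW]; case: oN => P oP PN.
have /nbhs_ballP [e e0 eP] : nbhs (val a) P.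
  by apply: open_nbhs_nbhs; split => //; rewrite -PN in Na.
by exists e => // b /eP Pb; apply: NW; rewrite -PN.
Qed.

Definition segp (p q : pt) (r : R) : pt :=
  (r * (q.1 - p.1) + p.1, r * (q.2 - p.2) + p.2).

Lemma convex_unit_disk (a b c d r : R) : 0 <= r <= 1 ->
  a * a + b * b <= 1 -> c * c + d * d <= 1 ->
  (r * (c - a) + a) * (r * (c - a) + a) + (r * (d - b) + b) * (r * (d - b) + b) <= 1.
Proof.
move=> /andP[r0 r1] ab1 cd1.
have : 0 <= r * (1 - r) * ((c - a) * (c - a) + (d - b) * (d - b)).
  by rewrite !mulr_ge0 ?subr_ge0 // -!expr2 addr_ge0 // sqr_ge0.
have : 0 <= (1 - r) * (1 - (a * a + b * b)) by rewrite mulr_ge0 ?subr_ge0.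
have : 0 <= r * (1 - (c * c + d * d)) by rewrite mulr_ge0 ?subr_ge0.
nra.
Qed.

Lemma segp_disk (p q : pt) r : disk_set p -> disk_set q -> i01 r ->
  disk_set (segp p q r).
Proof.
rewrite /disk_set /segp /= => /RleP + /RleP + /i01P r01.
rewrite ?RplusE ?R1E => Hp Hq; apply/RleP; rewrite ?RplusE ?R1E.
by rewrite !expr2 in Hp Hq *; exact: convex_unit_disk.
Qed.

Definition seg (a b : Disk) (r : R) : Disk := insubd a (segp (val a) (val b) r).

Lemma seg_val a b r : i01 r -> val (seg a b r) = segp (val a) (val b) r.
Proof.
move=> r01; rewrite /seg insubdK //; apply/mem_set.
by apply: segp_disk => //; exact: set_valP.
Qed.

Lemma seg0 a b : seg a b 0 = a.
Proof.
apply: val_inj; rewrite seg_val; last exact: i01_0.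
by rewrite /segp !mul0r !add0r; case: (val a).
Qed.

Lemma seg1 a b : seg a b 1 = b.
Proof.
apply: val_inj; rewrite seg_val; last exact: i01_1.
by rewrite /segp !mul1r !subrK; case: (val b).
Qed.

Lemma seg_path a b : is_path (seg a b).
Proof.
apply: (@continuous_comp_initial Disk (subspace i01) _ val).
apply: (@subspace_eq_continuous _ _ _ (segp (val a) (val b))).
  by move=> r /set_mem r01; rewrite /from_subspace /= seg_val.
apply/continuous_subspaceT => r.
exact: (cvg_pair (@affine_continuous (_.1 - _.1) _ r) (@affine_continuous (_.2 - _.2) _ r)).
Qed.

Lemma convex_lt (x y m r : R) : m < x -> m < y -> 0 <= r <= 1 -> m < r * (y - x) + x.
Proof.
move=> mx my /andP[r0 r1]; have [->|r_neq1] := eqVneq r 1; first by rewrite mul1r subrK.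
have : 0 < (1 - r) * (x - m) by rewrite mulr_gt0 // subr_gt0 // lt_neqAle r_neq1.
have : 0 <= r * (y - m) by rewrite mulr_ge0 // subr_ge0 ltW.
nra.
Qed.

Lemma convex_gt (x y m r : R) : x < m -> y < m -> 0 <= r <= 1 -> r * (y - x) + x < m.
Proof.
move=> xm ym r01; have := @convex_lt (- x) (- y) (- m) r.
rewrite !ltrN2 => /(_ xm ym r01).
by rewrite (_ : r * (- y - - x) + - x = - (r * (y - x) + x)) ?ltrN2 //; ring.
Qed.

Lemma seg_ball (c : pt) e a b r : ball c e (val a) -> ball c e (val b) ->
  i01 r -> ball c e (val (seg a b r)).
Proof.
move=> ha hb r01; rewrite seg_val //; move/i01P: r01 => r01.
move: ha hb; rewrite /segp; case: (val a) => a1 a2; case: (val b) => b1 b2.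
rewrite /ball /= /prod_ball /ball /= !ltr_distlC.
move=> [/andP[? ?] /andP[? ?]] [/andP[? ?] /andP[? ?]].
by split; apply/andP; split; [apply: convex_lt|apply: convex_gt|apply: convex_lt|apply: convex_gt].
Qed.

Lemma ball_pairP (c p : pt) e :
  ball c e p <-> `|c.1 - p.1| < e /\ `|c.2 - p.2| < e.
Proof. by []. Qed.

End Disk.

(** * Directed wedges of disks *)

Section DirectedWedge.
Local Open Scope ring_scope.
Context {d : Order.disp_t} {S : porderType d} (z : S -> Disk).

Local Notation lift := (dlift z).

Lemma openE_dwedge (A : set (dwedge z)) : open A <->
  exists2 F, F `<=` finI_from (@dwedge_open _ _ z) id & \bigcup_(i in F) i = A.
Proof. by split => -[F ? ?]; exists F. Qed.

Lemma dwedge_open_open (V : set (dwedge z)) : @dwedge_open _ _ z V -> open V.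
Proof. exact: (subbase_open openE_dwedge). Qed.

Lemma dlift_continuous s : continuous (lift s).
Proof. by apply: (subbase_continuous openE_dwedge) => U [oU _]. Qed.

Lemma dlift_eq (t s : S) (b b' : Disk) : lift t b = lift s b' ->
  (t = s /\ b = b') \/ (b = z t /\ b' = z s).
Proof.
pose f (i : S) (x : Disk) : option (S * Disk) :=
  if x == z i then None else Some (i, x).
have fz i j : f i (z i) = f j (z j) by rewrite /f !eqxx.
move=> /(congr1 (wedge_fun f)); rewrite /dlift !wedge_lift_funE //.
rewrite /f; case: eqP => [->|_]; case: eqP => [->|_] //.
- by move=> _; right.
- by move=> [-> ->]; left.
Qed.

Lemma dlift_base (s t : S) : lift s (z s) = lift t (z t).
Proof. exact: (@wedge_liftE S (fun=> Disk) z t (z t) s (z s)). Qed.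

Lemma dlift_surj (x : dwedge z) : exists s b, x = lift s b.
Proof.
have : [set: wedge z] x by [].
by rewrite -wedgeTE => -[s _ [b _ <-]]; exists s, b.
Qed.

Lemma path_comp_dlift (V : set (dwedge z)) s (a b : Disk) :
  (forall r, i01 r -> V (lift s (seg a b r))) ->
  path_comp V (lift s a) (lift s b).
Proof.
move=> segV; exists (lift s \o seg a b); split.
- apply: (continuous_within_comp (B := setT) (@seg_path a b)) => //.
  exact/continuous_subspaceT/dlift_continuous.
- by rewrite /= seg0.
- by rewrite /= seg1.
- by move=> _ [r r01 <-]; exact: segV.
Qed.

Lemma dwedge_path_comp (x y : dwedge z) : path_comp setT x y.
Proof.
have to_base s a : path_comp setT (lift s a) (lift s (z s)) by apply: path_comp_dlift.
have [s [a ->]] := dlift_surj x; have [t [b ->]] := dlift_surj y.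
apply: (path_comp_trans (to_base s a)); rewrite (dlift_base s t).
exact: path_comp_sym.
Qed.

Hypothesis dirS : directed S.

Lemma dwedge_open_setI (V1 V2 : set (dwedge z)) :
  @dwedge_open _ _ z V1 -> @dwedge_open _ _ z V2 -> @dwedge_open _ _ z (V1 `&` V2).
Proof.
move=> [oV1 tail1] [oV2 tail2]; split => [t|s [V1b V2b]].
  by rewrite preimage_setI; exact: openI.
have [t1 T1] := tail1 s V1b; have [t2 T2] := tail2 s V2b.
have [c [t1c t2c]] := dirS t1 t2; exists c => s' cs' w Hw; split.
  by apply: (T1 s') => //; exact: le_lt_trans t1c cs'.
by apply: (T2 s') => //; exact: le_lt_trans t2c cs'.
Qed.

(** A subbasic neighbourhood of the base point contains [lift s'] for all
    [s'] beyond some [t] and a ball around the centre [z s'] of every disk;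
    the union of these pieces, each star-shaped about the base point, is the
    required neighbourhood. *)
Lemma dwedge_lpc_base (s : S) (U : set (dwedge z)) : nbhs (lift s (z s)) U ->
  exists V : set (dwedge z),
    [/\ open V, V (lift s (z s)), V `<=` U & path_connected V].
Proof.
move=> nU; set x := lift s (z s).
have [|V1 V2 oV1 oV2 V1x V2x|V [[oV tailV] Vx] VU] :=
    subbase_nbhs_basic openE_dwedge _ _ nU.
- by exists setT; split => //; split => [t|s0 _]; [exact: openT | exists s].
- by exists (V1 `&` V2); split => //; exact: dwedge_open_setI.
have [t tV] := tailV s Vx.
have ex_rad s' : exists e : R, 0 < e /\
    forall b : Disk, ball (val (z s')) e (val b) -> V (lift s' b).
  have : nbhs (z s') (lift s' @^-1` V).
    by apply: open_nbhs_nbhs; split; [exact: oV | rewrite /preimage /= (dlift_base s' s)].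
  by move=> /disk_nbhs_ball [e e0 eV]; exists e; split.
pose rad s' := projT1 (cid (ex_rad s')).
have [rad0 radV] : (forall s', 0 < rad s') /\ forall s' (b : Disk),
    ball (val (z s')) (rad s') (val b) -> V (lift s' b).
  by split => s'; rewrite /rad; case: cid => ? [].
pose V' := [set y | exists s' b, y = lift s' b /\
  ((t < s')%O \/ ball (val (z s')) (rad s') (val b))].
have V'x : V' x by exists s, (z s); split => //; right; exact: ballxx.
have to_base y : V' y -> path_comp V' y x.
  move=> [s' [b [-> Hb]]]; rewrite /x (dlift_base s s').
  apply: path_comp_dlift => r r01; exists s', (seg b (z s') r); split => //.
  by case: Hb => Hb; [left | right; apply: seg_ball => //; exact: ballxx].
exists V'; split => //.
- apply: dwedge_open_open; split => [s'|s0 _]; last first.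
    by exists t => s' ts' _ [b _ <-]; exists s', b; split => //; left.
  have -> : lift s' @^-1` V' = [set b | (t < s')%O \/ ball (val (z s')) (rad s') (val b)].
    apply/seteqP; split => b /=; last by move=> Hb; exists s', b.
    move=> [s'' [b' [/dlift_eq [[-> ->] | [-> _]] Hb']]] //.
    by right; exact: ballxx.
  have [ts'|ts'] := boolP (t < s')%O.
    rewrite (_ : [set b | _] = setT); first exact: openT.
    by apply/seteqP; split => // b _; left.
  rewrite (_ : [set b | _] = [set b : Disk | ball (val (z s')) (rad s') (val b)]).
    exact: disk_ball_open.
  by apply/seteqP; split => b; [case => // Hb; rewrite Hb in ts' | right].
- move=> y [s' [b [-> [ts'|Hb]]]]; apply: VU; last exact: radV.
  by apply: (tV s') => //; exists b.
- by move=> y1 y2 /to_base h1 /to_base h2; exact: path_comp_trans h1 (path_comp_sym h2).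
Qed.

(** Away from the base point, a small ball in one disk avoiding its centre
    is open in the wedge: the tail condition is vacuous for it. *)
Lemma dwedge_lpc_off_base (s : S) (a : Disk) (U : set (dwedge z)) :
  a != z s -> nbhs (lift s a) U ->
  exists V : set (dwedge z), [/\ open V, V (lift s a), V `<=` U & path_connected V].
Proof.
move=> a_neq nU.
have [e e0 eU] := disk_nbhs_ball (@dlift_continuous s a U nU).
pose dist := `|(val a).1 - (val (z s)).1| + `|(val a).2 - (val (z s)).2|.
have dist0 : 0 < dist.
  rewrite lt_neqAle addr_ge0 // andbT eq_sym paddr_eq0 // !normr_eq0 !subr_eq0.
  apply: contra a_neq => /andP[/eqP E1 /eqP E2]; apply/eqP/val_inj.
  by move: E1 E2; case: (val a) => ? ?; case: (val (z s)) => ? ? /= -> ->.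
pose e' := Num.min e (dist / 2).
have e'0 : 0 < e' by rewrite lt_min e0 divr_gt0.
have small_ball (b : Disk) : ball (val a) e' (val b) ->
    ball (val a) e (val b) /\ b != z s.
  move=> /ball_pairP; rewrite !lt_min => -[/andP[h1 h1'] /andP[h2 h2']].
  split; first exact/ball_pairP.
  apply/eqP => Eb; rewrite Eb in h1' h2'; move: h1' h2'; rewrite /dist.
  move: `|(val a).1 - (val (z s)).1| `|(val a).2 - (val (z s)).2| => u v; lra.
have not_base b t : ball (val a) e' (val b) -> lift s b = lift t (z t) -> False.
  move=> /small_ball [_ /eqP b_neq] /dlift_eq [[ts Eb] | [Eb _]]; apply: b_neq => //.
  by rewrite Eb ts.
pose V := [set y | exists b, y = lift s b /\ ball (val a) e' (val b)].
exists V; split.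
- apply: dwedge_open_open; split => [t|s0 [b [E Hb]]]; last first.
    by case: (not_base b s0 Hb (esym E)).
  have [->|nts] := pselect (t = s).
    have -> : lift s @^-1` V = [set b | ball (val a) e' (val b)].
      apply/seteqP; split => b /=; last by move=> Hb; exists b.
      move=> [b' [/dlift_eq [[_ ->] // | [-> Eb']] Hb']].
      by case: (not_base b' s Hb'); rewrite -Eb'.
    exact: disk_ball_open.
  have -> : lift t @^-1` V = set0.
    apply/seteqP; split => b //= [b' [/dlift_eq [[Ets _] // | [_ Eb']] Hb']].
    by case: (not_base b' s Hb'); rewrite Eb'.
  exact: open0.
- by exists a; split => //; exact: ballxx.
- by move=> y [b [-> Hb]]; exact: eU (small_ball _ Hb).1.
- move=> y1 y2 [b1 [-> H1]] [b2 [-> H2]]; apply: path_comp_dlift => r r01.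
  by exists (seg b1 b2 r); split => //; exact: seg_ball.
Qed.

Lemma dwedge_Peano : Peano (dwedge z).
Proof.
split; first exact: path_connected_connected dwedge_path_comp.
move=> x U; have [s [a ->]] := dlift_surj x.
have [->|a_neq] := eqVneq a (z s); first exact: dwedge_lpc_base.
exact: dwedge_lpc_off_base.
Qed.

End DirectedWedge.

Lemma choice_dep (I : Type) (T : I -> Type) (P : forall i, T i -> Prop) :
  (forall i, exists x, P i x) -> exists f : forall i, T i, forall i, P i (f i).
Proof. by move=> exP; exists (fun i => projT1 (cid (exP i))) => i; case: cid. Qed.

Section ProductTopology.
Context {S : Type} {E : S -> topologicalType}.

Let sup_cvg := @cvg_sup _ S
  (fun i => Topological.class (@initial_topology (forall s, E s) (E i) (fun f => f i))).

Lemma prod_proj_continuous (s : S) : continuous (fun f : prod_topology E => f s).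
Proof.
move=> x U /(@initial_continuous _ _ (fun f : forall s, E s => f s) x) xU.
exact: ((sup_cvg x (nbhs_filter (x : prod_topology E))).1 (@cvg_id _ _) s).
Qed.

Lemma continuous_prod {X : topologicalType} (g : X -> prod_topology E) :
  (forall s, continuous (fun x => g x s)) -> continuous g.
Proof.
move=> cg x; apply: (sup_cvg (g x) _).2 => i.
exact: (continuous_comp_initial (w := fun f : forall s, E s => f i)).
Qed.

End ProductTopology.
Arguments prod_proj_continuous {S E} s.

Section Subspace.
Context {Y : topologicalType} (A : set Y).

Lemma continuous_set_type {X : topologicalType} (g : X -> set_type A) :
  continuous (fun x => val (g x)) -> continuous g.
Proof. exact: (@continuous_comp_initial (set_type A) X Y val g). Qed.

Lemma set_val_continuous : continuous (fun a : set_type A => val a).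
Proof. exact: initial_continuous. Qed.

Lemma path_comp_set_type (a b : set_type A) :
  path_comp A (val a) (val b) -> @path_comp (set_type A) setT a b.
Proof.
move=> [g [pg g0 g1 gA]]; exists (fun r => insubd a (g r)); split => //.
- apply: (continuous_set_type (X := subspace i01)).
  apply: (@subspace_eq_continuous _ _ _ g) => // r /set_mem r01.
  by rewrite /from_subspace /= insubdK //; apply/mem_set; apply: gA; exists r.
- by apply: val_inj; rewrite insubdK // g0; exact: valP.
- by apply: val_inj; rewrite insubdK // g1; exact: valP.
Qed.

End Subspace.

(** * The Peano fibered product *)

Unset Implicit Arguments.

Section FiberedProduct.
Context {B : topologicalType} {S : Type} {E : S -> topologicalType}
  (p : forall s, E s -> B) (e : forall s, E s).

Local Notation FS := (fib_space p e).

Definition fib_proj (t : S) (x : FS) : E t :=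
  projT1 (x : set_type (fib_comp p e)) t.

Lemma fib_proj_continuous t : continuous (fib_proj t).
Proof.
move=> x; have cval := continuous_comp (@peanify_id_continuous _ x) (@set_val_continuous _ _ x).
exact: continuous_comp cval (prod_proj_continuous t _).
Qed.

Lemma fib_proj_over s t (x : FS) : p s (fib_proj s x) = p t (fib_proj t x).
Proof. exact: (path_comp_memr (set_valP (x : set_type (fib_comp p e)))). Qed.

Lemma fib_space_ext (x y : FS) :
  (forall t, fib_proj t x = fib_proj t y) -> x = y.
Proof. by move=> xy; apply: val_inj; exact: functional_extensionality_dep. Qed.

Lemma fib_space_Peano : Peano FS.
Proof.
split; last exact: peanify_lpc.
apply: path_connected_connected => x y; apply: path_comp_peanify.
apply: path_comp_set_type.
have ex : fib_comp p e (val x) := set_valP (x : set_type (fib_comp p e)).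
have ey : fib_comp p e (val y) := set_valP (y : set_type (fib_comp p e)).
exact: (path_comp_in_comp ex (path_comp_trans (path_comp_sym ex) ey)).
Qed.

Lemma fib_factor {X : topologicalType} (f : X -> B) (G : forall t, X -> E t)
    (x0 : X) (y0 : FS) :
  Peano X -> (forall t, continuous (G t)) -> (forall t, p t \o G t = f) ->
  (forall t, G t x0 = fib_proj t y0) ->
  exists g : X -> FS, continuous g /\ forall t x, fib_proj t (g x) = G t x.
Proof.
move=> PX cG pG Gx0.
pose Gprod x : prod_topology E := fun t => G t x.
have cGprod : continuous Gprod by apply: continuous_prod.
have Gprod_x0 : Gprod x0 = val (y0 : set_type (fib_comp p e)).
  exact: functional_extensionality_dep.
have Gcomp x : fib_comp p e (Gprod x).
  apply: path_comp_trans (set_valP (y0 : set_type (fib_comp p e))) _.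
  rewrite -Gprod_x0.
  apply: path_comp_map cGprod _ (Peano_path_comp PX x0 x) => y _ s t.
  by rewrite -[p s _]/((p s \o G s) y) -[p t _]/((p t \o G t) y) !pG.
pose g x : set_type (fib_comp p e) := exist _ (Gprod x) (mem_set (Gcomp x)).
exists (g : X -> FS); split => //.
exact/(continuous_peanify PX.2)/continuous_set_type.
Qed.

Lemma fib_map_dh_covering (s0 : S) :
  (forall s, dh_covering (p s)) -> dh_covering (fib_map p e s0).
Proof.
move=> cov; have cp s : continuous (p s) by case: (cov s).
split=> [x | d D z dirD e0 x0 f cf fx0].
  exact: continuous_comp (fib_proj_continuous s0 x) (cp s0 _).
have fx0_over t : f x0 = p t (fib_proj t e0) by rewrite fx0; exact: fib_proj_over.
have [G Glift] := choice_dep (fun t => (cov t).2 d D z dirD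
  (fib_proj t e0) x0 f cf (fx0_over t)).
have [/all_and3[cG pG Gx0] Guniq] := all_and2 Glift.
have [g [cg gG]] := fib_factor f G x0 e0 (dwedge_Peano z dirD) cG pG Gx0.
exists g; split; [split => // | ].
- by apply: funext => x; rewrite -(pG s0) /= -gG.
- by apply: fib_space_ext => t; rewrite gG Gx0.
- move=> g' [cg' pg' g'x0]; apply: funext => x; apply: fib_space_ext => t.
  rewrite gG; apply: (congr1 (fun h => h x) (Guniq t (fib_proj t \o g') _)).
  split.
  + by move=> y; exact: continuous_comp (cg' y) (fib_proj_continuous t _).
  + by apply: funext => y /=; rewrite (fib_proj_over t s0) -pg'.
  + by rewrite /= g'x0.
Qed.

Section BasePoint.
Variables (b0 : B) (he : forall s, p s (e s) = b0) (s0 : S).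

Lemma fib_pt_dh_ge s : (forall s, Peano (E s)) -> (forall s, dh_covering (p s)) ->
  dh_ge (fib_map p e s0) (fib_pt p e he) (p s) (e s).
Proof.
move=> PE cov; split => //; first exact: fib_space_Peano.
  exact: fib_map_dh_covering.
split; first by rewrite /fib_map /= !he.
exists (fib_proj s); split => //; first exact: fib_proj_continuous.
by apply: funext => x /=; rewrite (fib_proj_over s s0).
Qed.

Lemma dh_ge_fib_pt (E' : topologicalType) (q : E' -> B) (e' : E') :
  (forall s, dh_ge q e' (p s) (e s)) ->
  dh_ge q e' (fib_map p e s0) (fib_pt p e he).
Proof.
move=> ge_s; have [PE' _ covq _ [qe' _]] := ge_s s0.
have cov s : dh_covering (p s) by case: (ge_s s).
have exF s : exists f : E' -> E s, [/\ continuous f, p s \o f = q & f e' = e s].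
  by case: (ge_s s) => _ _ _ _ [].
have [F /all_and3[cF pF Fe']] := choice_dep exF.
have [g [cg gF]] := fib_factor q F e' (fib_pt p e he) PE' cF pF Fe'.
split => //; [exact: fib_space_Peano | exact: fib_map_dh_covering |].
split; first by rewrite qe' /fib_map /= he.
exists g; split => //.
- by apply: funext => x; rewrite -(pF s0) /= -gF.
- by apply: fib_space_ext => t; rewrite gF Fe'.
Qed.

End BasePoint.

End FiberedProduct.

Theorem proposition5p7 (B : topologicalType) (b0 : B)
  (S : Type) (s0 : S) (E : S -> topologicalType)
  (p : forall s, E s -> B) (e : forall s, E s)
  (he : forall s, p s (e s) = b0) :
  path_connected [set: B] ->
  (forall s, Peano (E s)) ->
  (forall s, dh_covering (p s)) ->
  [/\ dh_covering (fib_map p e s0),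
      (forall s, dh_ge (fib_map p e s0) (fib_pt p e he) (p s) (e s)) &
      (forall (E' : topologicalType) (q : E' -> B) (e' : E'),
         (forall s, dh_ge q e' (p s) (e s)) ->
         dh_ge q e' (fib_map p e s0) (fib_pt p e he))].
Proof.
move=> _ PE cov; split.
- exact: fib_map_dh_covering.
- by move=> s; exact: fib_pt_dh_ge.
- by move=> E' q e'; exact: dh_ge_fib_pt.
Qed.
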